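(* Let $n,N\ge 1$ be integers. For $c\in\{a,b\}$ let $\alpha^{(c)}\in\mathbb{R}^n$ have strictly positive entries and let $\beta^{(c)}=(\beta_{c,1},\dots,\beta_{c,n})$ with $0\le\beta_{c,i}<1$. Let $\mathcal{A}$ (for resource $a$) and $\mathcal{B}$ (for resource $b$) be finite sets of AIMD matrices built from $(\alpha^{(a)},\beta^{(a)})$ and $(\alpha^{(b)},\beta^{(b)})$ respectively, each containing the corresponding full-decrease drop matrix, denoted $A_1\in\mathcal{A}$ and $B_1\in\mathcal{B}$. Let $\mathcal{A}_\Gamma$ be the set of all matrices $\Gamma=\mathrm{diag}(\gamma_a,\gamma_b)\in\mathbb{R}^{2nN\times 2nN}$ where $\gamma_a$ is built from some $C_1,\dots,C_N\in\mathcal{A}$ and $\gamma_b$ from some $C_1,\dots,C_N\in\mathcal{B}$ as described in the context. Let $\Gamma_1\in\mathcal{A}_\Gamma$ be the matrix obtained by taking $C_1=\dots=C_N=A_1$ for $\gamma_a$ and $C_1=\dots=C_N=B_1$ for $\gamma_b$. Then: (a) For all $\Gamma\in\mathcal{A}_\Gamma$ and all $\zeta\in\mathbb{R}^{2nN}$, $\|\Gamma\zeta\|_{N,1}\le\|\zeta\|_{N,1}$. (b) The subspace $\mathcal{E}=\{\zeta=[z_a^\top\; z_b^\top]^\top\in\mathbb{R}^{2nN}: e^\top z_{a,1}=e^\top z_{b,1}=0\}$ is invariant under every $\Gamma\in\mathcal{A}_\Gamma$. (c) For all $\zeta\in\mathcal{E}$, $\|\Gamma_1\zeta\|_{N,1}\le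 q\|\zeta\|_{N,1}$, where $$q=\max\left(\frac1N\sum_{i=1}^N\beta_a^i,\ \frac1N\sum_{j=1}^N\beta_b^j\right)<1,$$ with $\beta_c=\max_{i}\beta_{c,i}$ the multiplicative-decrease parameter of resource $c\in\{a,b\}$.
   Context: $e=(1,\dots,1)^\top\in\mathbb{R}^n$. An AIMD matrix built from a growth vector $\alpha\in\mathbb{R}^n_{>0}$ and decrease parameters $\beta_1,\dots,\beta_n\in[0,1)$ is a matrix of the form $A=\mathrm{diag}(\tilde\beta)+(e^\top\alpha)^{-1}\alpha(e^\top-\tilde\beta^\top)$ where $\tilde\beta=(\tilde\beta_1,\dots,\tilde\beta_n)^\top$ with each $\tilde\beta_i\in\{\beta_i,1\}$; these matrices are nonnegative and column stochastic. The full-decrease drop matrix is the one with $\tilde\beta_i=\beta_i$ for all $i$. Given $C_1,\dots,C_N\in\mathbb{R}^{n\times n}$, set $P_m=C_mC_{m-1}\cdots C_1$ for $m=1,\dots,N$, and define $\gamma\in\mathbb{R}^{nN\times nN}$ as the $N\times N$ block matrix (blocks of size $n\times n$) whose $k$-th block in the first block column is $\frac1k\sum_{i=0}^{k-1}P_{N-i}$ ($k=1,\dots,N$) and all other blocks are zero. A vector $\zeta\in\mathbb{R}^{2nN}$ is written $\zeta=[z_a^\top\;z_b^\top]^\top$ with $z_c=[z_{c,1}^\top,\dots,z_{c,N}^\top]^\top$, $z_{c,k}\in\mathbb{R}^n$. The norm is $\|\zeta\|_{N,1}=\max_{c\in\{a,b\},\,k=1,\dots,N}\|z_{c,k}\|_1$,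 where $\|\cdot\|_1$ is the 1-norm on $\mathbb{R}^n$. *)

From HB Require Import structures.
From mathcomp Require Import all_boot all_order all_algebra.
Set Implicit Arguments. Unset Strict Implicit. Unset Printing Implicit Defensive.
Import Order.TTheory GRing.Theory Num.Theory.
Local Open Scope ring_scope.

Section AIMD.
Variable R : realFieldType.

Definition evec (n : nat) : 'cV[R]_n := const_mx 1.

Definition aimd_mx (n : nat) (alpha bt : 'cV[R]_n) : 'M[R]_n :=
  diag_mx bt^T + (((evec n)^T *m alpha) 0 0)^-1 *: (alpha *m ((evec n)^T - bt^T)).

Definition is_aimd (n : nat) (alpha beta : 'cV[R]_n) (A : 'M[R]_n) : Prop :=
  exists bt : 'cV[R]_n,
    (forall i, bt i 0 = beta i 0 \/ bt i 0 = 1) /\ A = aimd_mx alpha bt.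

Definition drop_mx (n : nat) (alpha beta : 'cV[R]_n) : 'M[R]_n := aimd_mx alpha beta.

(* P_m = C_m C_{m-1} ... C_1 (P_0 = identity, unused). *)
Fixpoint Pprod (n : nat) (C : nat -> 'M[R]_n) (m : nat) : 'M[R]_n :=
  match m with
  | 0 => 1%:M
  | m'.+1 => C m'.+1 *m Pprod C m'
  end.

(* gamma : N x N block matrix (blocks n x n); block (k, 0) (0-based k) is
   1/(k+1) * sum_{i=0}^{k} P_{N-i}; all other blocks zero. *)
Definition gamma_mx (n N : nat) (C : nat -> 'M[R]_n) : 'M[R]_(\sum_(k < N) n) :=
  @mxblock R N N (fun _ => n) (fun _ => n)
    (fun (k j : 'I_N) =>
       if val j == 0%N then
         (k.+1%:R)^-1 *: \sum_(i < k.+1) Pprod C (N - i)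
       else 0).

Definition Gamma_mx (n N : nat) (Ca Cb : nat -> 'M[R]_n)
  : 'M[R]_(\sum_(k < N) n + \sum_(k < N) n) :=
  block_mx (gamma_mx N Ca) 0 0 (gamma_mx N Cb).

Definition in_AGamma (n N : nat) (sA sB : seq 'M[R]_n)
  (G : 'M[R]_(\sum_(k < N) n + \sum_(k < N) n)) : Prop :=
  exists Ca Cb : nat -> 'M[R]_n,
    (forall m, (1 <= m <= N)%N -> Ca m \in sA) /\
    (forall m, (1 <= m <= N)%N -> Cb m \in sB) /\
    G = Gamma_mx N Ca Cb.

Definition norm1 (n : nat) (v : 'cV[R]_n) : R := \sum_i `|v i 0|.

(* z_a = upper half, z_b = lower half, z_{c,k} = k-th block of z_c *)
Definition zblk (n N : nat) (c : bool) (z : 'cV[R]_(\sum_(k < N) n + \sum_(k < N) n))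
  (k : 'I_N) : 'cV[R]_n :=
  @submxcol R N (fun _ => n) 1 (if c then usubmx z else dsubmx z) k.

Definition normN1 (n N : nat) (z : 'cV[R]_(\sum_(k < N) n + \sum_(k < N) n)) : R :=
  \big[Num.max/0]_(c : bool) \big[Num.max/0]_(k < N) norm1 (zblk c z k).

Definition in_E (n N : nat) (hN : (0 < N)%N)
  (z : 'cV[R]_(\sum_(k < N) n + \sum_(k < N) n)) : Prop :=
  ((evec n)^T *m zblk true z (Ordinal hN)) 0 0 = 0 /\
  ((evec n)^T *m zblk false z (Ordinal hN)) 0 0 = 0.

Definition betamax (n : nat) (beta : 'cV[R]_n) : R := \big[Num.max/0]_i beta i 0.

Definition qrate (n N : nat) (betaa betab : 'cV[R]_n) : R :=
  Num.max ((N%:R)^-1 * \sum_(1 <= i < N.+1) betamax betaa ^+ i)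
          ((N%:R)^-1 * \sum_(1 <= j < N.+1) betamax betab ^+ j).

End AIMD.

Arguments in_AGamma {R n} N sA sB G.
Arguments Gamma_mx {R n} N Ca Cb.
Arguments qrate {R n} N betaa betab.
Arguments normN1 {R n N} z.
Arguments in_E {R n N} hN z.

(* Proof idea: AIMD matrices are nonnegative and column stochastic, hence
   nonexpansive for the 1-norm and preserving e^T z.  Block (c, k) of
   Gamma zeta is the mean of P_N z_{c,1}, ..., P_{N-k} z_{c,1}, which gives
   (a) and (b).  On vectors with e^T z = 0 the drop matrix acts like
   A_1 - (1 - beta_c) alpha e^T / (e^T alpha), a nonnegative matrix with
   column sums beta_c, so A_1^m contracts them by beta_c^m.  Block (c, k) of
   Gamma_1 zeta is thus bounded by the mean of beta_c^N, ..., beta_c^(N-k),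
   the k+1 smallest powers among beta_c, ..., beta_c^N, hence by the mean of
   all of them, which is at most beta_c < 1. *)

From HB Require Import structures.
From mathcomp Require Import all_boot all_order all_algebra ring.
Import Order.TTheory GRing.Theory Num.Theory.
Local Open Scope ring_scope.
Set Implicit Arguments. Unset Strict Implicit. Unset Printing Implicit Defensive.

Section StochasticMatrices.
Variables (R : realFieldType) (n : nat).
Implicit Types (M : 'M[R]_n) (v : 'cV[R]_n).

Lemma evecT_mulmx v : ((evec R n)^T *m v) 0 0 = \sum_i v i 0.
Proof. by rewrite !mxE; apply: eq_bigr => i _; rewrite !mxE mul1r. Qed.

Lemma norm1_ge0 v : 0 <= norm1 v.
Proof. exact: sumr_ge0. Qed.

Lemma norm1Z (a : R) v : norm1 (a *: v) = `|a| * norm1 v.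
Proof. by rewrite /norm1 mulr_sumr; apply: eq_bigr => i _; rewrite mxE normrM. Qed.

Lemma norm1_sum (I : finType) (F : I -> 'cV[R]_n) :
  norm1 (\sum_k F k) <= \sum_k norm1 (F k).
Proof.
rewrite /norm1 exchange_big /=; apply: ler_sum => i _.
by rewrite summxE ler_norm_sum.
Qed.

Lemma norm1_mean_le k (F : 'I_k.+1 -> 'cV[R]_n) (x : 'I_k.+1 -> R) :
  (forall i, norm1 (F i) <= x i) ->
  norm1 ((k.+1%:R)^-1 *: \sum_i F i) <= (k.+1%:R)^-1 * \sum_i x i.
Proof.
move=> Fx; rewrite norm1Z ger0_norm ?invr_ge0 ?ler0n //.
rewrite ler_wpM2l ?invr_ge0 ?ler0n //.
exact: le_trans (norm1_sum _) (ler_sum _ (fun i _ => Fx i)).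
Qed.

Lemma norm1_mulmx_le M (c : R) v :
  (forall i j, 0 <= M i j) -> (forall j, \sum_i M i j <= c) ->
  norm1 (M *m v) <= c * norm1 v.
Proof.
move=> M_ge0 M_colsum; rewrite /norm1.
apply: (@le_trans _ _ (\sum_i \sum_j M i j * `|v j 0|)).
  apply: ler_sum => i _; rewrite mxE (le_trans (ler_norm_sum _ _ _)) //.
  by apply: ler_sum => j _; rewrite normrM ger0_norm.
rewrite exchange_big mulr_sumr; apply: ler_sum => j _.
by rewrite -mulr_suml ler_wpM2r.
Qed.

Lemma sum_mulmx M v :
  (forall j, \sum_i M i j = 1) -> \sum_i (M *m v) i 0 = \sum_i v i 0.
Proof.
move=> M_colsum; under eq_bigr do rewrite mxE.
by rewrite exchange_big; apply: eq_bigr => j _; rewrite -mulr_suml M_colsum mul1r.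
Qed.

Definition col_stochastic M :=
  (forall i j, 0 <= M i j) /\ (forall j, \sum_i M i j = 1).

Lemma norm1_Pprod_const_le (A : 'M[R]_n) (b : R) v :
  0 <= b -> (forall j, \sum_i A i j = 1) ->
  (forall w : 'cV[R]_n, \sum_i w i 0 = 0 -> norm1 (A *m w) <= b * norm1 w) ->
  \sum_i v i 0 = 0 -> forall m, norm1 (Pprod (fun _ => A) m *m v) <= b ^+ m * norm1 v.
Proof.
move=> b_ge0 A_colsum A_contract v_sum0.
have Pv_sum0 m : \sum_i (Pprod (fun _ => A) m *m v) i 0 = 0.
  by elim: m => [|m IHm] /=; rewrite ?mul1mx // -mulmxA sum_mulmx.
elim=> [|m IHm] /=; first by rewrite mul1mx expr0 mul1r.
rewrite -mulmxA (le_trans (A_contract _ (Pv_sum0 m))) //.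
by rewrite exprS -mulrA ler_wpM2l.
Qed.

Variables (C : nat -> 'M[R]_n) (K : nat).
Hypothesis C_stochastic : forall m, (1 <= m <= K)%N -> col_stochastic (C m).

Lemma norm1_Pprod_le m v : (m <= K)%N -> norm1 (Pprod C m *m v) <= norm1 v.
Proof.
elim: m => [|m IHm] mK /=; first by rewrite mul1mx.
have [C_ge0 C_colsum] := C_stochastic (m := m.+1) mK.
rewrite -mulmxA; apply: le_trans (IHm (ltnW mK)).
rewrite -[X in _ <= X]mul1r; apply: norm1_mulmx_le => // j.
by rewrite C_colsum.
Qed.

Lemma sum_Pprod m v : (m <= K)%N -> \sum_i (Pprod C m *m v) i 0 = \sum_i v i 0.
Proof.
elim: m => [|m IHm] mK /=; first by rewrite mul1mx.
have [_ C_colsum] := C_stochastic (m := m.+1) mK.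
by rewrite -mulmxA sum_mulmx // IHm // ltnW.
Qed.

Lemma norm1_mean_Pprod_le k v :
  norm1 ((k.+1%:R)^-1 *: \sum_(i < k.+1) (Pprod C (K - i) *m v)) <= norm1 v.
Proof.
apply: le_trans (norm1_mean_le (x := fun _ => norm1 v) _) _.
  by move=> i; rewrite norm1_Pprod_le ?leq_subr.
by rewrite sumr_const card_ord -[norm1 v *+ _]mulr_natl mulKf ?pnatr_eq0.
Qed.

End StochasticMatrices.

Section PowerMeans.
Variable R : realFieldType.

(* [qrate N betaa betab] unfolds to the maximum of the two [powmean N (betamax _)]. *)
Definition powmean (N : nat) (b : R) := (N%:R)^-1 * \sum_(1 <= i < N.+1) b ^+ i.

Lemma mean_nondecreasing (u : nat -> R) k m :
  (forall i j, (i <= j)%N -> u i <= u j) -> (k <= m)%N ->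
  (k.+1%:R)^-1 * \sum_(i < k.+1) u i <= (m.+1%:R)^-1 * \sum_(i < m.+1) u i.
Proof.
move=> u_mono; elim: m => [|m IHm]; first by rewrite leqn0 => /eqP ->.
rewrite leq_eqVlt ltnS => /predU1P [-> // | /IHm /le_trans]; apply.
have sum_le : \sum_(i < m.+1) u i <= m.+1%:R * u m.+1.
  have -> : m.+1%:R * u m.+1 = \sum_(i < m.+1) u m.+1.
    by rewrite sumr_const card_ord mulr_natl.
  by apply: ler_sum => i _; rewrite u_mono // ltnW.
rewrite [in X in _ <= X]big_ord_recr /= -[m.+2%:R]natr1; move: sum_le.
set S := \sum_(i < m.+1) u i; set x := u m.+1.
have a_gt0 : 0 < m.+1%:R :> R by rewrite ltr0n.
set a := m.+1%:R in a_gt0 * => S_le; clearbody a.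
rewrite -subr_ge0.
have -> : (a + 1)^-1 * (S + x) - a^-1 * S = (a * x - S) / (a * (a + 1)).
  by field; rewrite !gt_eqF // addr_gt0.
by rewrite divr_ge0 ?subr_ge0 ?mulr_ge0 ?addr_ge0 ?(ltW a_gt0).
Qed.

Lemma mean_pow_le_powmean (b : R) N k : 0 <= b <= 1 -> (k < N)%N ->
  (k.+1%:R)^-1 * \sum_(i < k.+1) b ^+ (N - i) <= powmean N b.
Proof.
move=> /andP [b_ge0 b_le1] kN.
have -> : powmean N b = (N.-1.+1%:R)^-1 * \sum_(i < N.-1.+1) b ^+ (N - i).
  rewrite prednK ?(leq_ltn_trans _ kN) // /powmean big_add1 /=.
  rewrite -(big_mkord xpredT (fun i => b ^+ (N - i))) big_nat_rev /=.
  by congr (_ * _); apply: eq_big_nat => i /andP [_ iN]; rewrite add0n subnSK.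
(* [i |-> b ^+ (N - i)] is nondecreasing, also past [N] thanks to truncated subtraction. *)
apply: (mean_nondecreasing (u := fun i => b ^+ (N - i))) => [i j ij|].
  by rewrite ler_wiXn2l // leq_sub2l.
by rewrite -ltnS prednK ?(leq_ltn_trans _ kN).
Qed.

Lemma powmean_ge0 (b : R) N : 0 <= b -> 0 <= powmean N b.
Proof. by move=> b_ge0; rewrite mulr_ge0 ?invr_ge0 ?sumr_ge0 // => i _; rewrite exprn_ge0. Qed.

Lemma powmean_le (b : R) N : (0 < N)%N -> 0 <= b <= 1 -> powmean N b <= b.
Proof.
move=> N_gt0 /andP [b_ge0 b_le1].
have sum_le : \sum_(1 <= i < N.+1) b ^+ i <= \sum_(1 <= i < N.+1) b.
  by apply: ler_sum_nat => i /andP [i_gt0 _]; rewrite -[X in _ <= X]expr1 ler_wiXn2l.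
rewrite sumr_const_nat subn1 /= -mulr_natl in sum_le.
have N_neq0 : N%:R != 0 :> R by rewrite pnatr_eq0 -lt0n.
by rewrite /powmean -[X in _ <= X](mulKf N_neq0) ler_wpM2l ?invr_ge0.
Qed.

End PowerMeans.

Section AIMDMatrices.
Variables (R : realFieldType) (n : nat) (alpha : 'cV[R]_n).
Hypothesis alpha_gt0 : forall i, 0 < alpha i 0.
Implicit Types (bt beta v : 'cV[R]_n).

Lemma aimd_mxE bt i j :
  aimd_mx alpha bt i j =
  (i == j)%:R * bt j 0 + (\sum_k alpha k 0)^-1 * (alpha i 0 * (1 - bt j 0)).
Proof.
rewrite /aimd_mx evecT_mulmx !mxE big_ord1 !mxE.
by congr (_ + _); case: eqP => [->|]; rewrite ?mul1r ?mul0r.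
Qed.

Lemma sum_alpha_gt0 (j : 'I_n) : 0 < \sum_k alpha k 0.
Proof.
rewrite (bigD1 j) //= ltr_pwDl ?alpha_gt0 //.
by apply: sumr_ge0 => k _; exact: ltW.
Qed.

Lemma aimd_mx_colsum bt j : \sum_i aimd_mx alpha bt i j = 1.
Proof.
under eq_bigr do rewrite aimd_mxE.
rewrite big_split /= (bigD1 j) //= eqxx mul1r big1 => [|i /negbTE ->]; last first.
  by rewrite mul0r.
rewrite -mulr_sumr -mulr_suml mulrA mulVf ?mul1r ?gt_eqF ?(sum_alpha_gt0 j) //.
by rewrite addr0 addrC subrK.
Qed.

Lemma aimd_mx_stochastic bt :
  (forall j, 0 <= bt j 0 <= 1) -> col_stochastic (aimd_mx alpha bt).
Proof.
move=> bt01; split=> [i j | ]; last exact: aimd_mx_colsum.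
have /andP [bt_ge0 bt_le1] := bt01 j.
by rewrite aimd_mxE addr_ge0 ?mulr_ge0 ?invr_ge0 ?subr_ge0
           ?(ltW (sum_alpha_gt0 j)) ?(ltW (alpha_gt0 i)).
Qed.

Lemma is_aimd_stochastic beta (A : 'M[R]_n) :
  (forall i, 0 <= beta i 0 < 1) -> is_aimd alpha beta A -> col_stochastic A.
Proof.
move=> beta01 [bt [bt_beta ->]]; apply: aimd_mx_stochastic => j.
have /andP [beta_ge0 beta_lt1] := beta01 j.
by case: (bt_beta j) => ->; rewrite ?ler01 ?lexx ?beta_ge0 ?ltW.
Qed.

Lemma aimd_mx_contract bt (b : R) v :
  (forall j, 0 <= bt j 0 <= b) -> \sum_i v i 0 = 0 ->
  norm1 (aimd_mx alpha bt *m v) <= b * norm1 v.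
Proof.
move=> bt0b v_sum0; set s := \sum_k alpha k 0.
pose M := \matrix_(i, j) (aimd_mx alpha bt i j - (1 - b) * (alpha i 0 / s)).
have -> : aimd_mx alpha bt *m v = M *m v.
  apply/matrixP => i k; rewrite !mxE (ord1 k).
  under [RHS]eq_bigr do rewrite mxE mulrBl.
  by rewrite sumrB -mulr_sumr v_sum0 mulr0 subr0.
apply: norm1_mulmx_le => [i j | j]; have /andP [bt_ge0 bt_le_b] := bt0b j.
  have s_gt0 : 0 < s := sum_alpha_gt0 j.
  have -> : M i j = (i == j)%:R * bt j 0 + alpha i 0 / s * (b - bt j 0).
    by rewrite mxE aimd_mxE -/s; ring.
  by rewrite addr_ge0 ?mulr_ge0 ?invr_ge0 ?subr_ge0 ?(ltW s_gt0) ?(ltW (alpha_gt0 i)).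
under eq_bigr do rewrite mxE.
rewrite sumrB aimd_mx_colsum -mulr_sumr -mulr_suml mulfV ?gt_eqF ?(sum_alpha_gt0 j) //.
by rewrite mulr1 opprB addrC subrK.
Qed.

Lemma betamax_ge0 beta : 0 <= betamax beta.
Proof. exact: bigmax_ge_id. Qed.

Lemma betamax_lt1 beta : (forall i, 0 <= beta i 0 < 1) -> betamax beta < 1.
Proof. by move=> beta01; apply: bigmax_lt => // i _; case/andP: (beta01 i). Qed.

Lemma powmean_betamax_lt1 beta N :
  (0 < N)%N -> (forall i, 0 <= beta i 0 < 1) -> powmean N (betamax beta) < 1.
Proof.
move=> N_gt0 beta01; apply: le_lt_trans (betamax_lt1 beta01).
by rewrite powmean_le ?betamax_ge0 ?ltW ?betamax_lt1.
Qed.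

Lemma norm1_mean_drop_le beta N k v :
  (forall i, 0 <= beta i 0 < 1) -> (k < N)%N -> \sum_i v i 0 = 0 ->
  norm1 ((k.+1%:R)^-1 *: \sum_(i < k.+1) (Pprod (fun _ => drop_mx alpha beta) (N - i) *m v))
    <= powmean N (betamax beta) * norm1 v.
Proof.
move=> beta01 kN v_sum0.
pose x (i : 'I_k.+1) := betamax beta ^+ (N - i) * norm1 v.
apply: le_trans (norm1_mean_le (x := x) _) _.
  move=> i; apply: norm1_Pprod_const_le => // [|j|w w_sum0]; first exact: betamax_ge0.
    exact: aimd_mx_colsum.
  apply: aimd_mx_contract w_sum0 => j.
  by have /andP [-> _] := beta01 j; rewrite (le_bigmax _ (fun i => beta i 0)).
by rewrite -mulr_suml mulrA ler_wpM2r ?norm1_ge0 // mean_pow_le_powmean ?betamax_ge0 ?ltW ?betamax_lt1.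
Qed.

End AIMDMatrices.

Section BlockVectors.
Variables (R : realFieldType) (n N : nat).
Implicit Types (z : 'cV[R]_(\sum_(k < N) n + \sum_(k < N) n)) (C Ca Cb : nat -> 'M[R]_n).

Lemma normN1_ge0 z : 0 <= normN1 z.
Proof. exact: bigmax_ge_id. Qed.

Lemma norm1_zblk_le z c k : norm1 (zblk c z k) <= normN1 z.
Proof.
apply: le_trans (le_bigmax _ _ c).
exact: le_bigmax _ (fun k => norm1 (zblk c z k)) k.
Qed.

Lemma normN1_le z x :
  0 <= x -> (forall c k, norm1 (zblk c z k) <= x) -> normN1 z <= x.
Proof. by move=> x_ge0 zx; apply: bigmax_le => // c _; apply: bigmax_le. Qed.

Lemma zblk_Gamma_mx (hN : (0 < N)%N) Ca Cb z c k :
  zblk c (Gamma_mx N Ca Cb *m z) k =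
  (k.+1%:R)^-1 *: \sum_(i < k.+1)
     (Pprod (if c then Ca else Cb) (N - i) *m zblk c z (Ordinal hN)).
Proof.
rewrite /zblk /Gamma_mx -[z in _ *m z]vsubmxK mul_block_col !mul0mx addr0 add0r.
have -> : (if c then usubmx (col_mx (gamma_mx N Ca *m usubmx z) (gamma_mx N Cb *m dsubmx z))
           else dsubmx (col_mx (gamma_mx N Ca *m usubmx z) (gamma_mx N Cb *m dsubmx z)))
          = gamma_mx N (if c then Ca else Cb) *m (if c then usubmx z else dsubmx z).
  by case: c; rewrite ?col_mxKu ?col_mxKd.
set C := if c then Ca else Cb; set w := if c then usubmx z else dsubmx z.
rewrite /gamma_mx -[w in _ *m w]submxcolK mul_mxblock_mxrow mxcolK.
rewrite (bigD1 (Ordinal hN)) //= [X in _ + X]big1 ?addr0 => [|j /eqP j_neq0].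
  by rewrite -scalemxAl mulmx_suml.
by case: eqP => [j0|_]; [case: j_neq0; apply: val_inj | rewrite mul0mx].
Qed.

End BlockVectors.

Section GammaMatrices.
Variables (R : realFieldType) (n N : nat) (hN : (0 < N)%N) (Ca Cb : nat -> 'M[R]_n).
Hypothesis Ca_stochastic : forall m, (1 <= m <= N)%N -> col_stochastic (Ca m).
Hypothesis Cb_stochastic : forall m, (1 <= m <= N)%N -> col_stochastic (Cb m).
Implicit Types z : 'cV[R]_(\sum_(k < N) n + \sum_(k < N) n).

Lemma normN1_Gamma_mx_le z : normN1 (Gamma_mx N Ca Cb *m z) <= normN1 z.
Proof.
apply: normN1_le (normN1_ge0 z) _ => c k.
rewrite (zblk_Gamma_mx hN); apply: le_trans (norm1_zblk_le z c _).
by apply: norm1_mean_Pprod_le; case: c.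
Qed.

Lemma in_E_Gamma_mx z : in_E hN z -> in_E hN (Gamma_mx N Ca Cb *m z).
Proof.
have first_block_sum c : ((evec R n)^T *m zblk c (Gamma_mx N Ca Cb *m z) (Ordinal hN)) 0 0
                         = ((evec R n)^T *m zblk c z (Ordinal hN)) 0 0.
  rewrite !evecT_mulmx (zblk_Gamma_mx hN) big_ord1 subn0 invr1 scale1r.
  by rewrite (@sum_Pprod _ _ _ N) //; case: c.
by rewrite /in_E !first_block_sum.
Qed.

End GammaMatrices.

Lemma normN1_Gamma_drop_le (R : realFieldType) (n N : nat) (hN : (0 < N)%N)
    (alphaa alphab betaa betab : 'cV[R]_n) :
  (forall i, 0 < alphaa i 0) -> (forall i, 0 < alphab i 0) ->
  (forall i, 0 <= betaa i 0 < 1) -> (forall i, 0 <= betab i 0 < 1) ->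
  forall z, in_E hN z ->
  normN1 (Gamma_mx N (fun _ => drop_mx alphaa betaa) (fun _ => drop_mx alphab betab) *m z)
    <= qrate N betaa betab * normN1 z.
Proof.
move=> alphaa_gt0 alphab_gt0 betaa01 betab01 z [za_sum0 zb_sum0].
have q_ge0 : 0 <= qrate N betaa betab by rewrite le_max powmean_ge0 ?betamax_ge0.
apply: normN1_le => [|c k]; first by rewrite mulr_ge0 ?normN1_ge0.
rewrite (zblk_Gamma_mx hN).
have -> : (if c then fun _ => drop_mx alphaa betaa else fun _ => drop_mx alphab betab)
          = fun _ => drop_mx (if c then alphaa else alphab) (if c then betaa else betab).
  by case: c.
apply: le_trans (norm1_mean_drop_le _ _ (ltn_ord k) _) _.
- by case: c.
- by case: c.
- by rewrite -evecT_mulmx; case: c.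
have powmean_le_q : powmean N (betamax (if c then betaa else betab)) <= qrate N betaa betab.
  by case: c; rewrite le_max lexx ?orbT.
by rewrite ler_pM ?powmean_ge0 ?betamax_ge0 ?norm1_ge0 ?norm1_zblk_le.
Qed.

Theorem lemma1 (R : realFieldType) (n N : nat) (hn : (0 < n)%N) (hN : (0 < N)%N)
  (alphaa alphab betaa betab : 'cV[R]_n)
  (halphaa : forall i, 0 < alphaa i 0) (halphab : forall i, 0 < alphab i 0)
  (hbetaa : forall i, 0 <= betaa i 0 < 1) (hbetab : forall i, 0 <= betab i 0 < 1)
  (sA sB : seq 'M[R]_n)
  (hsA : forall A, A \in sA -> is_aimd alphaa betaa A)
  (hsB : forall B, B \in sB -> is_aimd alphab betab B)
  (hA1 : drop_mx alphaa betaa \in sA)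
  (hB1 : drop_mx alphab betab \in sB) :
  let Gamma1 := Gamma_mx N (fun _ => drop_mx alphaa betaa) (fun _ => drop_mx alphab betab) in
  (* (a) *)
  (forall G, in_AGamma N sA sB G -> forall zeta, normN1 (G *m zeta) <= normN1 zeta) /\
  (* (b) *)
  (forall G, in_AGamma N sA sB G -> forall zeta, in_E hN zeta -> in_E hN (G *m zeta)) /\
  (* (c) *)
  ((forall zeta, in_E hN zeta ->
      normN1 (Gamma1 *m zeta) <= qrate N betaa betab * normN1 zeta) /\
   qrate N betaa betab < 1).
Proof.
move=> Gamma1.
have sA_stochastic A : A \in sA -> col_stochastic A.
  by move/hsA; apply: is_aimd_stochastic.
have sB_stochastic B : B \in sB -> col_stochastic B.
  by move/hsB; apply: is_aimd_stochastic.
split; [|split; [|split]].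
- move=> G [Ca [Cb [CaA [CbB ->]]]] z.
  apply: (normN1_Gamma_mx_le hN) => m mN.
  + exact/sA_stochastic/CaA.
  + exact/sB_stochastic/CbB.
- move=> G [Ca [Cb [CaA [CbB ->]]]] z.
  apply: in_E_Gamma_mx => m mN.
  + exact/sA_stochastic/CaA.
  + exact/sB_stochastic/CbB.
- exact: normN1_Gamma_drop_le.
- by rewrite gt_max !powmean_betamax_lt1.
Qed.
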